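(* Let $n\in\mathbb N^+$. For every $N\in\mathbb N^+$, no solution $k$ of $$-\frac{1}{2^{n+1}-1}\tan\Big(\frac k2\Big)=\tan(Nk),\qquad k\in(0,\pi),$$ lies in $\pi\mathbb Q$. *)

From Stdlib Require Import Reals QArith.
Open Scope R_scope.

Definition in_piQ (k : R) : Prop :=
  exists (p : Z) (q : positive), k = PI * (IZR p / IZR (Zpos q)).

From Stdlib Require Import Reals QArith Lra Lia.
From mathcomp Require all_boot all_order all_algebra ring zify Rstruct complex.

Open Scope R_scope.

(* With z = exp(ik), the tangent equation becomes the polynomial relation
   2^n (z^(2N+1) - 1) = (2^n - 1) (z - z^(2N)), equivalently
   1 - e = 2^n (1 + z^-1) (1 - z^(2N)) with e = z^(2N-1).  If k lies in pi*Q,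
   z and e are roots of unity, hence algebraic integers, so 2^n divides 1 - e.
   If e has order r > 1, the product of the 1 - e^i (0 < i < r) equals r, so
   2^(n(r-1)) divides r, which forces n = 1 and r = 2; then z^3 = 1, and e = -1
   cannot be a power of z.  Finally e = 1 forces z = +-1, i.e. sin k = 0. *)

Lemma tan_relation_sin (c x y : R) :
  c <> 0 -> cos x <> 0 -> cos y <> 0 -> - (1 / c) * tan x = tan y ->
  (c + 1) * sin (x + y) = (c - 1) * sin (x - y).
Proof.
  intros Hc Hx Hy Htan; unfold tan in Htan.
  assert (H : sin x * cos y + c * cos x * sin y = 0).
  { replace (sin x * cos y + c * cos x * sin y)
      with (c * cos x * cos y * (sin y / cos y - - (1 / c) * (sin x / cos x)))
      by (field; auto).
    rewrite Htan; ring. }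
  rewrite sin_plus, sin_minus.
  apply Rminus_diag_uniq.
  replace (_ - _) with (2 * (sin x * cos y + c * cos x * sin y)) by ring.
  rewrite H; ring.
Qed.

Lemma sin_relation_double (A a b : R) :
  A * sin a = (A - 1) * sin b ->
  A * (cos (2 * a) - 1) = (A - 1) * (cos (a + b) - cos (a - b)) /\
  A * sin (2 * a) = (A - 1) * (sin (a + b) - sin (a - b)).
Proof.
  intros H; rewrite cos_2a_sin, sin_2a, cos_plus, cos_minus, sin_plus, sin_minus; split.
  - transitivity (-2 * sin a * (A * sin a)); [ring | rewrite H; ring].
  - transitivity (2 * cos a * (A * sin a)); [ring | rewrite H; ring].
Qed.

Lemma tan_relation_multiples (A : R) (N : nat) (k : R) :
  1 <= A -> cos (k / 2) <> 0 -> cos (INR N * k) <> 0 ->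
  - (1 / (2 * A - 1)) * tan (k / 2) = tan (INR N * k) ->
  A * (cos (INR (S (2 * N)) * k) - 1) = (A - 1) * (cos k - cos (INR (2 * N) * k)) /\
  A * sin (INR (S (2 * N)) * k) = (A - 1) * (sin k - sin (INR (2 * N) * k)).
Proof.
  intros HA Hx Hy Htan.
  set (a := k / 2 + INR N * k); set (b := k / 2 - INR N * k).
  assert (Hab : A * sin a = (A - 1) * sin b).
  { pose proof (tan_relation_sin (2 * A - 1) _ _ ltac:(lra) Hx Hy Htan).
    unfold a, b; lra. }
  replace (INR (S (2 * N)) * k) with (2 * a)
    by (unfold a; rewrite S_INR, mult_INR; simpl; field).
  replace (INR (2 * N) * k) with (a - b)
    by (unfold a, b; rewrite mult_INR; simpl; field).
  assert (Hk : a + b = k) by (unfold a, b; field).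
  rewrite <- Hk; exact (sin_relation_double A a b Hab).
Qed.

Lemma in_piQ_full_turn (k : R) :
  in_piQ k -> exists m : nat, (0 < m)%nat /\ cos (INR m * k) = 1 /\ sin (INR m * k) = 0.
Proof.
  intros [p [q Hk]].
  assert (Hsin : sin (IZR p * PI) = 0) by (apply sin_eq_0_1; now exists p).
  exists (2 * Pos.to_nat q)%nat; split; [lia |].
  replace (INR (2 * Pos.to_nat q) * k) with (2 * (IZR p * PI)).
  - rewrite cos_2a_sin, sin_2a, Hsin; split; ring.
  - rewrite Hk, mult_INR, INR_IPR; change (IPR q) with (IZR (Zpos q)); simpl (INR 2).
    field.
    apply not_0_IZR; discriminate.
Qed.

(* MathComp is imported only inside this module: ssrnat would otherwise
   reinterpret the [%nat] comparisons in the statement of [lemma23]. *)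
Module UnityRoots.
Set Warnings "-notation-overridden -ambiguous-paths".
Import all_boot all_order all_algebra ring zify Rstruct complex.
Import GRing.Theory Num.Theory.

Section PrimitiveRootProduct.
Local Open Scope ring_scope.

Lemma prod_one_sub_prim_root {F : fieldType} {r : nat} {e : F} :
  r.-primitive_root e -> \prod_(1 <= i < r) (1 - e ^+ i) = r%:R.
Proof.
move=> pr_e; have r_gt0 := prim_order_gt0 pr_e.
have Xsub1_neq0 : 'X - 1 != 0 :> {poly F}.
  by have := polyXsubC_eq0 (1 : F); rewrite polyC1 => ->.
have := factor_Xn_sub_1 pr_e.
rewrite big_ltn // expr0 polyC1 subrX1 => /(mulfI Xsub1_neq0) /(congr1 (horner^~ 1)).
rewrite horner_prod horner_sum; under eq_bigr do rewrite !hornerE.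
by under [RHS]eq_bigr do rewrite hornerXn expr1n; rewrite sumr_const card_ord.
Qed.

End PrimitiveRootProduct.

Lemma exp2_mul_pred_leq n r :
  (0 < n)%N -> (1 < r)%N -> (2 ^ (n * r.-1) <= r)%N -> n = 1%N /\ r = 2%N.
Proof.
move=> n_gt0 r_gt1 le_r; case: r r_gt1 le_r => [|[|s]] //= _.
have s_lt := ltn_expl s (ltnSn 1).
have [n1|n_gt1] := leqP n 1.
  have -> : n = 1%N by apply/eqP; rewrite eqn_leq n1.
  by rewrite mul1n expnS; split => //; lia.
suff : (s.+2 < 2 ^ (n * s.+1))%N by rewrite ltnNge => /negP.
apply: leq_trans (ltn_expl _ (ltnSn 1)) _; rewrite leq_exp2l //; nia.
Qed.

Section IntegralUnityRoots.
Local Open Scope ring_scope.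
Variable K : numFieldType.
Local Notation integral := (integralOver (intr : {rmorphism int -> K})).

Lemma prime_dvdn_of_integral (p r : nat) (y : K) :
  prime p -> integral y -> p%:R * y = r%:R -> (p %| r)%N.
Proof.
move=> p_pr [q mon_q /rootP].
rewrite horner_coef size_map_inj_poly //; last exact: intr_inj.
set d := (size q).-1 => qy0 py_r.
have sq : size q = d.+1 by rewrite prednK // size_poly_gt0 monic_neq0.
have sum0 : \sum_(i < d.+1) q`_i * r%:Z ^+ i * p%:Z ^+ (d - i) = 0.
  apply: (@intr_inj K); rewrite rmorph_sum rmorph0 -[RHS](mulr0 (p%:R ^+ d)).
  rewrite -[in RHS]qy0 sq mulr_sumr.
  apply: eq_bigr => i _; rewrite coef_map /= !rmorphM !rmorphXn /= -!pmulrn -py_r.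
  have -> : p%:R ^+ d = p%:R ^+ (d - i) * p%:R ^+ i :> K.
    by rewrite -exprD subnK // -ltnS.
  by move: (q`_i)%:~R (p%:R : K) => a b; rewrite exprMn; ring.
have q_d : q`_d = 1 by exact: (monicP mon_q).
move: sum0; rewrite big_ord_recr /= subnn mulr1 q_d mul1r.
move/(canRL (addKr _)); rewrite addr0 => rd.
suff : (p %| r ^ d)%N by rewrite Euclid_dvdX // => /andP[].
have : (p%:Z %| r%:Z ^+ d)%Z.
  rewrite rd rpredN rpred_sum // => i _.
  by rewrite dvdz_mull // -(subnSK (ltn_ord i)) exprS dvdz_mulr.
by rewrite dvdzE abszX.
Qed.

Lemma prime_power_dvdn_of_integral (p t r : nat) (x : K) :
  prime p -> integral x -> (p ^ t)%:R * x = r%:R -> (p ^ t %| r)%N.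
Proof.
move=> p_pr; elim: t r x => [|t IHt] r x Ix; first by rewrite expn0 dvd1n.
rewrite expnS natrM -mulrA => Er.
have Ipx : integral ((p ^ t)%:R * x) by apply: integral_mul => //; exact: integral_nat.
have /dvdnP[s Ds] := prime_dvdn_of_integral _ _ _ p_pr Ipx Er.
rewrite Ds mulnC dvdn_pmul2r ?prime_gt0 //; apply: IHt Ix _.
apply: (mulfI (x := p%:R)); first by rewrite pnatr_eq0 -lt0n prime_gt0.
by rewrite Er Ds natrM mulrC.
Qed.

Lemma integral_unity_root {m : nat} {z : K} : (0 < m)%N -> z ^+ m = 1 -> integral z.
Proof.
move=> m_gt0 zm; exists ('X^m - 1); first by rewrite -(rmorph1 polyC) monicXnsubC.
by rewrite rmorphB /= map_polyXn rmorph1 rootE !hornerE zm subrr.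
Qed.

Lemma prim_root_one_sub_dvdn (p n r : nat) (e w : K) :
  prime p -> r.-primitive_root e -> integral w -> 1 - e = (p ^ n)%:R * w ->
  (p ^ (n * r.-1) %| r)%N.
Proof.
move=> p_pr pr_e Iw e_w; pose S i := \sum_(j < i) e ^+ j.
apply: (@prime_power_dvdn_of_integral _ _ _ (\prod_(1 <= i < r) (w * S i)) p_pr).
  apply: big_ind => [|x y|i _]; [exact: integral1 | exact: integral_mul |].
  apply: integral_mul => //.
  apply: big_ind => [|x y|j _]; [exact: integral0 | exact: integral_add |].
  apply: (integral_unity_root (prim_order_gt0 pr_e)).
  by rewrite exprAC (prim_expr_order pr_e) expr1n.
rewrite -(prod_one_sub_prim_root pr_e) expnM natrX -subn1 -prodr_const_nat -big_split /=.
apply: eq_bigr => i _; rewrite mulrA -e_w /S.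
by rewrite -[LHS]opprK -mulNr opprB -subrX1 opprB.
Qed.

Lemma one_sub_exp_factor (a z : K) (M : nat) : z != 0 ->
  a * (z ^+ M.+2 - 1) = (a - 1) * (z - z ^+ M.+1) ->
  1 - z ^+ M = a * ((1 + z^-1) * (1 - z ^+ M.+1)).
Proof.
move=> z_neq0 rel; rewrite !exprS in rel *.
have -> : a * ((1 + z^-1) * (1 - z * z ^+ M)) = 1 - z ^+ M + z^-1 *
    ((a - 1) * (z - z * z ^+ M) - a * (z * (z * z ^+ M) - 1)) by field.
by rewrite rel subrr mulr0 addr0.
Qed.

Lemma no_unity_root_solution {z : K} {m n : nat} (M : nat) :
  (0 < m)%N -> (0 < n)%N -> z ^+ m = 1 -> z != 1 -> z != -1 ->
  2 ^+ n * (z ^+ M.+2 - 1) != (2 ^+ n - 1) * (z - z ^+ M.+1).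
Proof.
move=> m_gt0 n_gt0 zm z_neq1 z_neqN1; apply/eqP => rel.
have z_neq0 : z != 0.
  by apply: contra_eq_neq _ zm => ->; rewrite expr0n gtn_eqF // eq_sym oner_neq0.
set e := z ^+ M; set w := (1 + z^-1) * (1 - z ^+ M.+1).
have e_w : 1 - e = 2 ^+ n * w by apply: one_sub_exp_factor.
have em : e ^+ m = 1 by rewrite exprAC zm expr1n.
have Iw : integral w.
  have IzV : integral z^-1 by apply: (integral_unity_root m_gt0); rewrite exprVn zm invr1.
  have IzM : integral (z ^+ M.+1).
    by apply: (integral_unity_root m_gt0); rewrite exprAC zm expr1n.
  by apply: integral_mul; [apply: integral_add | apply: integral_sub] => //; apply: integral1.
have [r pr_e _] := prim_order_exists m_gt0 em.
have e_neq1 : e != 1.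
  apply/eqP => e1; move/eqP: e_w; rewrite /w exprS -/e e1 subrr mulr1 eq_sym !mulf_eq0.
  rewrite expf_eq0 pnatr_eq0 andbF /= addr_eq0 subr_eq0.
  case/orP => /eqP; last by move=> z1; rewrite -z1 eqxx in z_neq1.
  move/(congr1 (fun x => - x^-1)); rewrite invr1 invrN !opprK invrK => zN1.
  by rewrite -zN1 eqxx in z_neqN1.
have r_gt1 : (1 < r)%N.
  have : ~~ (r %| 1)%N by rewrite (prim_order_dvd pr_e) expr1.
  by rewrite dvdn1; have := prim_order_gt0 pr_e; lia.
have [n1 r2] : n = 1%N /\ r = 2.
  apply: exp2_mul_pred_leq => //; apply: dvdn_leq; first lia.
  by apply: (prim_root_one_sub_dvdn 2 n r e w) => //; rewrite natrX.
have eN1 : e = -1.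
  by have /eqP := prim_expr_order pr_e; rewrite r2 sqrf_eq1 (negbTE e_neq1) => /eqP.
have w1 : w = 1.
  apply: (mulfI (x := 2)); first by rewrite pnatr_eq0.
  by rewrite n1 expr1 in e_w; rewrite -e_w eN1 opprK mulr1.
have z3 : z ^+ 3 = 1.
  have -> : z ^+ 3 = 1 + (z - 1) * z * (w - 1).
    by rewrite /w [z ^+ M.+1]exprS -/e eN1; field.
  by rewrite w1 subrr mulr0 addr0.
have : (r %| 3)%N by rewrite (prim_order_dvd pr_e) exprAC z3 expr1n.
by rewrite r2.
Qed.

End IntegralUnityRoots.

Section ComplexExponential.
Local Open Scope ring_scope.
Local Open Scope complex_scope.

Definition expi (t : R) : R[i] := cos t +i* sin t.

Lemma expi_natmul (j : nat) (t : R) : expi (INR j * t) = expi t ^+ j.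
Proof.
elim: j => [|j IH]; first by rewrite /expi Rmult_0_l cos_0 sin_0.
rewrite exprSr -IH /expi S_INR Rmult_plus_distr_r Rmult_1_l cos_plus sin_plus.
by simpc; rewrite ?RmultE ?RminusE ?RplusE; congr (_ +i* _); ring.
Qed.

End ComplexExponential.

Lemma expi_relation_not_in_piQ (n N : nat) (k : R) :
  (0 < n)%coq_nat -> (0 < N)%coq_nat -> sin k <> 0 ->
  2 ^ n * (cos (INR (2 * N).+1 * k) - 1) = (2 ^ n - 1) * (cos k - cos (INR (2 * N) * k)) ->
  2 ^ n * sin (INR (2 * N).+1 * k) = (2 ^ n - 1) * (sin k - sin (INR (2 * N) * k)) ->
  ~ in_piQ k.
Proof.
move=> /ltP n_gt0 /ltP N_gt0 sk Hcos Hsin /in_piQ_full_turn [m [/ltP m_gt0 [cm sm]]].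
have zm : (expi k ^+ m = 1)%R by rewrite -expi_natmul /expi cm sm.
have [M NM] : exists M, (2 * N)%N = M.+1 by exists (2 * N).-1; rewrite prednK // muln_gt0.
have z_neq1 : (expi k != 1)%R by apply/eqP => -[_ /sk].
have z_neqN1 : (expi k != -1)%R by apply/eqP => -[_ s0]; apply: sk; rewrite s0 oppr0.
move: (no_unity_root_solution _ M m_gt0 n_gt0 zm z_neq1 z_neqN1) => /eqP; apply.
have two_n : (2 ^+ n)%R = real_complex R (pow 2 n).
  by rewrite RpowE rmorphXn (rmorph_nat (real_complex R) 2).
rewrite -!expi_natmul -NM /expi two_n; simpc.
by congr (Complex _ _); rewrite ?(mul0r, subr0, subrr, addr0); [exact: Hcos | exact: Hsin].
Qed.

End UnityRoots.

Theorem lemma23 (n N : nat) (hn : (1 <= n)%nat) (hN : (1 <= N)%nat) (k : R) :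
  0 < k < PI ->
  cos (INR N * k) <> 0 ->
  - (1 / (2 ^ (n + 1) - 1)) * tan (k / 2) = tan (INR N * k) ->
  ~ in_piQ k.
Proof.
  intros Hk HcosN Htan.
  assert (Hsin : sin k <> 0) by (apply Rgt_not_eq, sin_gt_0; lra).
  assert (Hcos : cos (k / 2) <> 0) by (apply Rgt_not_eq, cos_gt_0; lra).
  assert (HA : 1 <= 2 ^ n) by (apply pow_R1_Rle; lra).
  replace (2 ^ (n + 1)) with (2 * 2 ^ n) in Htan by (rewrite pow_add; ring).
  destruct (tan_relation_multiples (2 ^ n) N k HA Hcos HcosN Htan) as [Hc Hs].
  exact (UnityRoots.expi_relation_not_in_piQ n N k hn hN Hsin Hc Hs).
Qed.
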